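(* Let $m>6C^2(C+1)$ and $l_m=\lfloor\frac{m-2}{C+1}\rfloor$. Let $F_m(\mathbf x)=\sum_{i=1}^n a_iP_m(x_i)$ be a node of the escalator tree of $m$-gonal forms with $n\ge (C-2)l_m+5$ and $a_1=a_2=\cdots=a_{(C-2)l_m+5}=1$. If $a_1+a_2+\cdots+a_n\ge m-4$, then $F_m(\mathbf x)$ is universal (hence a leaf).
   Context: For an integer $m\ge 3$ and $x\in\mathbb Z$ put $P_m(x)=\frac{m-2}{2}x^2-\frac{m-4}{2}x$. An $m$-gonal form of rank $n$ is $a_1P_m(x_1)+\cdots+a_nP_m(x_n)$ with positive integers $a_1\le\cdots\le a_n$ and $x_i\in\mathbb Z$; it represents $N$ if $N$ is a value at some integer vector, and is universal if it represents every positive integer. The truant of a non-universal form is the smallest positive integer it does not represent (the empty form has truant $1$). The escalator tree of $m$-gonal forms is the rooted tree whose root is the empty form; a universal node is a leaf, and a non-universal node $\sum_{i=1}^k a_iP_m(x_i)$ has as children exactly all forms $\sum_{i=1}^{k+1}a_iP_m(x_i)$ with $a_{k+1}\ge a_k$ (any $a_1\ge1$ if $k=0$) that represent the truant of the node. Standing assumption: $C$ is a fixed absolute constant such that for every $m\ge3$, every $m$-gonal form that represents every positive integer in $[1,C(m-2)]$ is universal. *)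

From mathcomp Require Import all_boot all_order all_algebra.
Set Implicit Arguments. Unset Strict Implicit. Unset Printing Implicit Defensive.
Import Order.TTheory GRing.Theory Num.Theory.
Open Scope ring_scope.

(* m-gonal number P_m(x) = ((m-2) x^2 - (m-4) x) / 2, for x in Z.
   The numerator is always even, so the integer division is exact. *)
Definition Pm (m : nat) (x : int) : int :=
  ((((m%:Z - 2) * x ^+ 2 - (m%:Z - 4) * x) %/ 2)%Z).

(* A form a_1 P_m(x_1) + ... + a_n P_m(x_n) is given by its coefficient
   list a = [:: a_1; ...; a_n]. *)
Definition represents (m : nat) (a : seq nat) (N : nat) : Prop :=
  exists x : seq int, size x = size a /\
    (\sum_(i < size a) (nth 0%N a i)%:Z * Pm m (nth 0 x i))%R = N%:Z.

Definition universal (m : nat) (a : seq nat) : Prop :=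
  forall N : nat, (0 < N)%N -> represents m a N.

Definition is_truant (m : nat) (a : seq nat) (t : nat) : Prop :=
  [/\ (0 < t)%N, ~ represents m a t &
      forall k : nat, (0 < k < t)%N -> represents m a k].

Inductive escalator_node (m : nat) : seq nat -> Prop :=
  | esc_root : escalator_node m [::]
  | esc_child : forall (a : seq nat) (b t : nat),
      escalator_node m a ->
      ~ universal m a ->
      is_truant m a t ->
      (0 < b)%N ->
      (last 1%N a <= b)%N ->
      represents m (rcons a b) t ->
      escalator_node m (rcons a b).

From mathcomp Require Import all_boot all_order all_algebra.
From mathcomp Require Import zify ring.
Import Order.TTheory GRing.Theory Num.Theory.
Open Scope ring_scope.

(* By the universality criterion it suffices to represent every N <= C(m-2).
   Write N = q(m-3) + r with r < m-3; the bound on m forces q <= C <= k - 2.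
   - P_m takes no value strictly between 1 and m-3, so a form represents no
     integer in (sum of its coefficients, m-4].  Hence in an escalator node
     every new coefficient is at most 1 + the sum of the earlier ones, as long
     as that sum stays below m-4: the coefficient sequence is "complete up to
     m-4" ([escalator_node_complete]).
   - In a complete sequence, every r <= m-4 is approximated from below by a
     subset sum of the coefficients following the prefix of ones, with an
     error at most the length k of that prefix ([subset_sum_approx]).
   - The leading ones represent q(m-3) + R for every R <= k, using
     P_m(-1) = m-3, P_m(2) = m and P_m(1) = 1 ([ones_represent]).
   Values of P_m and the evaluation of forms come first, then the escalator
   property, subset sums and representations by ones, and finally the
   arithmetic on C and m that feeds the main theorem. *)

Lemma Pm_val (m : nat) (x v : int) :
  (m%:Z - 2) * x ^+ 2 - (m%:Z - 4) * x = v * 2 -> Pm m x = v.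
Proof. by rewrite /Pm => ->; rewrite mulzK. Qed.

Lemma Pm0 (m : nat) : Pm m 0 = 0.
Proof. by apply: Pm_val; ring. Qed.

Lemma Pm1 (m : nat) : Pm m 1 = 1.
Proof. by apply: Pm_val; ring. Qed.

Lemma PmN1 (m : nat) : Pm m (-1) = m%:Z - 3.
Proof. by apply: Pm_val; ring. Qed.

Lemma Pm2 (m : nat) : Pm m 2 = m%:Z.
Proof. by apply: Pm_val; ring. Qed.

(* Polygonal numbers are nonnegative: x(x-1) >= 0 on the integers. *)
Lemma Pm_ge0 (m : nat) (x : int) : (4 <= m)%N -> 0 <= Pm m x.
Proof.
move=> m_ge4; rewrite /Pm divz_ge0 //.
have [x_ge1|x_le0] := lerP 1 x; last by nia.
have : 0 <= (x - 1) * ((m%:Z - 2) * x + 2) by apply: mulr_ge0; nia.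
by nia.
Qed.

Lemma Pm_cases (m : nat) (x : int) : (4 <= m)%N ->
  [\/ Pm m x = 0, Pm m x = 1 | m%:Z - 3 <= Pm m x].
Proof.
move=> m_ge4; have [->|x_neq0] := eqVneq x 0; first by rewrite Pm0; constructor 1.
have [->|x_neq1] := eqVneq x 1; first by rewrite Pm1; constructor 2.
constructor 3; rewrite /Pm lez_divRL //.
have [x_ge2|x_lt2] := lerP 2 x; first by nia.
have x_leN1 : x <= -1 by lia.
by nia.
Qed.

Definition form_value (m : nat) (a : seq nat) (x : seq int) : int :=
  \sum_(p <- zip a x) p.1%:Z * Pm m p.2.

Lemma represents_form_value (m : nat) (a : seq nat) (N : nat) :
  represents m a N <-> exists x, size x = size a /\ form_value m a x = N%:Z.
Proof.
have value_sum x : size x = size a ->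
    \sum_(i < size a) (nth 0%N a i)%:Z * Pm m (nth 0 x i) = form_value m a x.
  rewrite /form_value; elim: a x {N} => [|c a IH] [|z x] //=; first by rewrite big_ord0 big_nil.
  by case=> size_x; rewrite big_ord_recl big_cons -IH.
by split=> -[x [size_x val_x]]; exists x; rewrite -?value_sum // value_sum in val_x.
Qed.

Lemma form_value_cons (m c : nat) (a : seq nat) (z : int) (x : seq int) :
  form_value m (c :: a) (z :: x) = c%:Z * Pm m z + form_value m a x.
Proof. by rewrite /form_value big_cons. Qed.

Lemma form_value_cat (m : nat) (a1 a2 : seq nat) (x1 x2 : seq int) :
  size x1 = size a1 ->
  form_value m (a1 ++ a2) (x1 ++ x2) = form_value m a1 x1 + form_value m a2 x2.
Proof. by move=> size_x1; rewrite /form_value zip_cat // big_cat. Qed.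

Lemma form_value_rcons (m b : nat) (a : seq nat) (z : int) (x : seq int) :
  size x = size a -> form_value m (rcons a b) (rcons x z) = form_value m a x + b%:Z * Pm m z.
Proof. by move=> size_x; rewrite /form_value zip_rcons // big_rcons. Qed.

Lemma form_value_ge0 (m : nat) (a : seq nat) (x : seq int) :
  (4 <= m)%N -> 0 <= form_value m a x.
Proof. by move=> m_ge4; apply: sumr_ge0 => p _; rewrite mulr_ge0 ?Pm_ge0. Qed.

Lemma form_value_ones (m : nat) (x : seq int) :
  form_value m (nseq (size x) 1%N) x = \sum_(z <- x) Pm m z.
Proof. by rewrite /form_value; elim: x => [|z x IH]; rewrite ?big_nil //= !big_cons mul1r IH. Qed.

Lemma form_value_mask (m : nat) (t : seq nat) (y : seq bool) : size y = size t ->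
  form_value m t (map (fun b : bool => (b : nat)%:Z) y) = (\sum_(c <- mask y t) c)%N%:Z.
Proof.
elim: t y => [|c t IH] [|b y] //=; first by rewrite /form_value !big_nil.
move=> [size_y]; rewrite form_value_cons IH //.
by case: b; rewrite /= ?big_cons ?Pm1 ?Pm0 ?mulr1 ?mulr0 ?add0r ?PoszD.
Qed.

(* By the gap in [Pm_cases], a term c P_m(z) of value <= m-4 is at most c. *)
Lemma term_le_coef (m c : nat) (z : int) : (4 <= m)%N ->
  c%:Z * Pm m z <= m%:Z - 4 -> c%:Z * Pm m z <= c%:Z.
Proof.
move=> m_ge4; case: (Pm_cases m z m_ge4) => [->|->|Pm_big]; rewrite ?mulr0 ?mulr1 //.
case: c => [|c]; first by rewrite mul0r.
have : c.+1%:Z * (m%:Z - 3) <= c.+1%:Z * Pm m z by apply: ler_wpM2l.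
by nia.
Qed.

Lemma form_value_small (m : nat) (a : seq nat) (x : seq int) : (4 <= m)%N ->
  form_value m a x <= m%:Z - 4 -> form_value m a x <= (\sum_(c <- a) c)%N%:Z.
Proof.
move=> m_ge4; elim: a x => [|c a IH] [|z x];
  try by rewrite /form_value /= big_nil.
rewrite form_value_cons big_cons PoszD => small.
have term_ge0 : 0 <= c%:Z * Pm m z by rewrite mulr_ge0 ?Pm_ge0.
have rest_ge0 := form_value_ge0 m a x m_ge4.
have term_le := @term_le_coef m c z m_ge4 ltac:(lia).
have rest_le := IH x ltac:(lia).
by lia.
Qed.

Lemma not_represents_small (m : nat) (a : seq nat) (N : nat) : (4 <= m)%N ->
  (N <= m - 4)%N -> (\sum_(c <- a) c < N)%N -> ~ represents m a N.
Proof.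
move=> m_ge4 N_small N_big /represents_form_value [x [_ val_x]].
by have := form_value_small m a x m_ge4; rewrite val_x; lia.
Qed.

Lemma truant_le_sum {m : nat} {a : seq nat} {t : nat} : (4 <= m)%N ->
  is_truant m a t -> (\sum_(c <- a) c < m - 4)%N -> (t <= (\sum_(c <- a) c).+1)%N.
Proof.
move=> m_ge4 [_ _ below_t] sum_small; rewrite leqNgt; apply/negP => t_big.
apply: (@not_represents_small m a (\sum_(c <- a) c).+1) => //.
by apply: below_t; rewrite ltn0Sn.
Qed.

(* The new coefficient of an escalator child is at most the truant it represents,
   since the new variable must contribute a positive multiple of it. *)
Lemma child_coef_le_truant {m : nat} {a : seq nat} {b t : nat} : (4 <= m)%N ->
  is_truant m a t -> represents m (rcons a b) t -> (b <= t)%N.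
Proof.
move=> m_ge4 [_ a_misses_t _] /represents_form_value [xz [size_xz val_t]].
case/lastP: xz size_xz val_t => [|x z]; rewrite ?size_rcons // => -[size_x].
rewrite form_value_rcons // => val_t.
have rest_ge0 := form_value_ge0 m a x m_ge4.
case: (Pm_cases m z m_ge4) => [Pm_z0|Pm_z1|Pm_big].
- apply: False_ind; apply: a_misses_t; apply/represents_form_value.
  by exists x; rewrite -val_t Pm_z0 mulr0 addr0.
- by move: val_t; rewrite Pm_z1 mulr1; lia.
- have : b%:Z * (m%:Z - 3) <= b%:Z * Pm m z by apply: ler_wpM2l.
  by nia.
Qed.

Definition complete_upto (M : nat) (s : seq nat) : Prop :=
  forall (s1 : seq nat) (b : nat) (s2 : seq nat), s = s1 ++ b :: s2 ->
    (\sum_(c <- s1) c < M)%N -> (b <= (\sum_(c <- s1) c).+1)%N.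

Lemma complete_upto_rcons {M b : nat} {s : seq nat} :
  complete_upto M (rcons s b) ->
  complete_upto M s /\ ((\sum_(c <- s) c < M)%N -> (b <= (\sum_(c <- s) c).+1)%N).
Proof.
move=> complete; split; last by apply: (complete s b [::]); rewrite cats1.
by move=> s1 b' s2 def_s; apply: (complete s1 b' (rcons s2 b)); rewrite def_s rcons_cat.
Qed.

Lemma subset_sum_approx {M : nat} {p t : seq nat} : complete_upto M (p ++ t) ->
  forall r : nat, (r <= \sum_(c <- p ++ t) c)%N -> (r <= M)%N ->
  exists y : seq bool, size y = size t /\
    (\sum_(c <- mask y t) c <= r <= \sum_(c <- mask y t) c + \sum_(c <- p) c)%N.
Proof.
elim/last_ind: t => [|t b IH] complete r r_le_sum r_le_M.
  by exists [::]; rewrite cats0 in r_le_sum; rewrite /= big_nil add0n r_le_sum.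
rewrite -rcons_cat in complete; have [complete_t b_small] := complete_upto_rcons complete.
rewrite -rcons_cat big_rcons /= in r_le_sum.
have [r_le|r_gt] := leqP r (\sum_(c <- p ++ t) c).
  have [y [size_y approx]] := IH complete_t r r_le r_le_M.
  by exists (rcons y false); rewrite !size_rcons mask_rcons //= cats0 size_y.
have b_le_r : (b <= r)%N by have := b_small ltac:(lia); lia.
have [y [size_y approx]] := IH complete_t (r - b)%N ltac:(lia) ltac:(lia).
exists (rcons y true); rewrite !size_rcons mask_rcons //= cats1 big_rcons /= size_y.
by split=> //; lia.
Qed.

Lemma escalator_node_sorted {m : nat} {a : seq nat} : escalator_node m a ->
  all (fun c => 0 < c)%N a /\ sorted leq a.
Proof.
elim=> [|a' b t _ [a'_pos a'_sorted] _ _ b_pos b_ge_last _] //.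
rewrite all_rcons b_pos a'_pos; split=> //.
by case: a' a'_sorted b_ge_last {a'_pos} => [|c a'] //= sorted_a' ?; rewrite rcons_path sorted_a'.
Qed.

Lemma escalator_node_complete {m : nat} {a : seq nat} : (4 <= m)%N ->
  escalator_node m a -> complete_upto (m - 4) a.
Proof.
move=> m_ge4; elim=> [|a' b t _ IH _ truant_t _ _ child_t] s1 b' s2.
  by case: s1.
case/lastP: s2 => [|s2 c].
- rewrite cats1 => /rcons_inj [<- <-] sum_small.
  apply: leq_trans (child_coef_le_truant m_ge4 truant_t child_t) _.
  exact: truant_le_sum m_ge4 truant_t sum_small.
- by rewrite -rcons_cons -rcons_cat => /rcons_inj [def_a' _]; apply: IH def_a'.
Qed.

Lemma sum_Pm_nseq (m n : nat) (z : int) : \sum_(x <- nseq n z) Pm m x = Pm m z * n%:Z.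
Proof.
rewrite big_nseq; elim: n => [|n IH] /=; first by rewrite mulr0.
by rewrite IH -addn1 PoszD mulrDr mulr1 addrC.
Qed.

Lemma sum_Pm_witness (m v d e : nat) : (3 <= m)%N ->
  \sum_(x <- nseq d (-1) ++ nseq v 2 ++ nseq e 1) Pm m x = ((v + d) * (m - 3) + (3 * v + e))%N%:Z.
Proof.
move=> m_ge3; rewrite !big_cat /= !sum_Pm_nseq PmN1 Pm2 Pm1.
have [m' ->] : exists m', m = (m' + 3)%N by exists (m - 3)%N; rewrite subnK.
by rewrite addnK !PoszD !PoszM; ring.
Qed.

(* k ones represent q(m-3) + R whenever q + 2 <= k and R <= k: trade triples
   of ones for the conversion of P_m(-1) into P_m(2) while R allows it. *)
Lemma ones_represent {m k q R : nat} : (3 <= m)%N -> (q + 2 <= k)%N -> (R <= k)%N ->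
  exists x : seq int, size x = k /\ form_value m (nseq k 1%N) x = (q * (m - 3) + R)%N%:Z.
Proof.
move=> m_ge3 q_small R_small.
have [v [d [e [def_q def_R few_terms]]]] :
    exists v d e, [/\ q = (v + d)%N, R = (3 * v + e)%N & (d + v + e <= k)%N].
  case: (leqP q (R %/ 3)) => [q_le|q_gt].
    by rewrite leq_divRL // in q_le; exists q, 0%N, (R - 3 * q)%N; split; lia.
  by exists (R %/ 3)%N, (q - R %/ 3)%N, (R %% 3)%N; split; lia.
pose x0 : seq int := nseq d (-1) ++ nseq v 2 ++ nseq e 1.
have size_x0 : size x0 = (d + v + e)%N by rewrite !size_cat !size_nseq addnA.
have size_x : size (x0 ++ nseq (k - size x0) 0) = k.
  by rewrite size_cat size_nseq subnKC ?size_x0.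
exists (x0 ++ nseq (k - size x0) 0); split=> //.
rewrite -{1}size_x form_value_ones big_cat /= sum_Pm_nseq Pm0 mul0r addr0.
by rewrite sum_Pm_witness // def_q def_R.
Qed.

Lemma take_constant {T : Type} {x0 c : T} {k : nat} {s : seq T} : (k <= size s)%N ->
  (forall i : nat, (i < k)%N -> nth x0 s i = c) -> take k s = nseq k c.
Proof.
move=> k_le const; apply: (@eq_from_nth _ x0); first by rewrite size_takel ?size_nseq.
by move=> i; rewrite size_takel // => i_lt; rewrite nth_take // nth_nseq i_lt const.
Qed.

Lemma escalator_node_represents {m k N : nat} {a : seq nat} : (4 <= m)%N ->
  escalator_node m a -> (k <= size a)%N -> (forall i : nat, (i < k)%N -> nth 0%N a i = 1%N) ->
  (m - 4 <= \sum_(c <- a) c)%N -> (N %/ (m - 3) + 2 <= k)%N -> represents m a N.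
Proof.
move=> m_ge4 node k_le ones sum_big q_small.
set q := (N %/ (m - 3))%N in q_small; set r := (N %% (m - 3))%N.
have def_N : N = (q * (m - 3) + r)%N by rewrite /q /r -divn_eq.
have r_small : (r <= m - 4)%N by rewrite /r -ltnS (leq_trans (ltn_pmod _ _)); lia.
have def_a : a = nseq k 1%N ++ drop k a by rewrite -(take_constant k_le ones) cat_take_drop.
have complete := escalator_node_complete m_ge4 node; rewrite def_a in complete.
have [y [size_y /andP [tail_le tail_ge]]] := subset_sum_approx complete r
  ltac:(rewrite -def_a; lia) r_small.
have sum_ones : (\sum_(c <- nseq k 1%N) c)%N = k by rewrite -sumnE sumn_nseq mul1n.
rewrite sum_ones in tail_ge; set s := (\sum_(c <- mask y (drop k a)) c)%N in tail_le tail_ge.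
have [x [size_x value_x]] := @ones_represent m k q (r - s) ltac:(lia) q_small ltac:(lia).
apply/represents_form_value; exists (x ++ map (fun b : bool => (b : nat)%:Z) y).
split; first by rewrite {1}def_a !size_cat size_map size_x size_y size_nseq.
rewrite {1}def_a form_value_cat ?size_nseq // value_x form_value_mask // -PoszD.
by rewrite -addnA subnK // -def_N.
Qed.

Definition universality_criterion (C : nat) : Prop :=
  forall (m : nat) (a : seq nat), (3 <= m)%N ->
    all (fun c => 0 < c)%N a -> sorted leq a ->
    (forall N : nat, (1 <= N <= C * (m - 2))%N -> represents m a N) ->
    universal m a.

(* The criterion forces C > 0, as the empty form does not represent 1. *)
Lemma universality_criterion_gt0 {C : nat} : universality_criterion C -> (0 < C)%N.
Proof.
case: C => // HC; have empty_universal : universal 3 [::] by apply: HC => // N; lia.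
have /represents_form_value [x [_]] := empty_universal 1%N isT.
by case: x => [|? ?]; rewrite /form_value /= big_nil.
Qed.

Lemma quotient_le {C m N : nat} : (C + 3 < m)%N -> (N <= C * (m - 2))%N ->
  (N %/ (m - 3) <= C)%N.
Proof.
move=> m_big; have m3_pos : (0 < m - 3)%N by lia.
rewrite (_ : m - 2 = (m - 3).+1)%N ?mulnS; last by lia.
move=> N_le; rewrite -ltnS ltn_divLR // mulSn.
by apply: leq_ltn_trans N_le _; rewrite ltn_add2r; lia.
Qed.

(* The prefix (C-2) l_m + 5 of ones has length at least C+2 once l_m >= 1. *)
Lemma ones_prefix_long {C m : nat} : (C + 3 <= m)%N ->
  (C + 2 <= (C - 2) * ((m - 2) %/ (C + 1)) + 5)%N.
Proof.
move=> m_big; have [C_small|C_big] := leqP C 3.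
  by apply: leq_trans (leq_addl _ _); lia.
have l_pos : (0 < (m - 2) %/ (C + 1))%N by rewrite divn_gt0; lia.
have : (C - 2 <= (C - 2) * ((m - 2) %/ (C + 1)))%N by rewrite leq_pmulr.
by move: ((C - 2) * _)%N => P; lia.
Qed.

Theorem lemma4p15 (C : nat)
  (HC : forall (m : nat) (a : seq nat), (3 <= m)%N ->
          all (fun c => 0 < c)%N a -> sorted leq a ->
          (forall N : nat, (1 <= N <= C * (m - 2))%N -> represents m a N) ->
          universal m a)
  (m : nat) (Hm : (6 * C ^ 2 * (C + 1) < m)%N)
  (a : seq nat) (Hnode : escalator_node m a)
  (Hn : ((C - 2) * ((m - 2) %/ (C + 1)) + 5 <= size a)%N)
  (Hones : forall i : nat, (i < (C - 2) * ((m - 2) %/ (C + 1)) + 5)%N ->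
           nth 0%N a i = 1%N)
  (Hsum : (m - 4 <= \sum_(c <- a) c)%N) :
  universal m a.
Proof.
have C_pos : (0 < C)%N := universality_criterion_gt0 HC.
have m_big : (C + 3 < m)%N.
  by move: Hm; rewrite expnS expn1; nia.
have [a_pos a_sorted] := escalator_node_sorted Hnode.
apply: HC => //; first by lia.
move=> N /andP [_ N_le]; apply: (escalator_node_represents _ Hnode Hn Hones Hsum); first by lia.
apply: leq_trans (ones_prefix_long (ltnW m_big)).
by rewrite leq_add2r (quotient_le m_big N_le).
Qed.
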